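(* Let $H$ be either $\mathrm{Sym}(m)$ acting on the set $\Delta$ of $k$-element subsets of $\{1,\ldots,m\}$, where $m\ge 5$ and $1\le k<m/2$, or $\mathrm{P\Gamma L}_d(q)$ acting on the set $\Delta$ of points of the projective space $\mathrm{PG}_{d-1}(q)$, where $d\ge 2$ and $q\ge 4$ is a prime power; let $r=|\Delta|$. Let $\ell\geq 2$ and let $H^\ell$ act coordinatewise on $\Omega=\Delta^\ell$. Suppose $g=(h_1,\ldots,h_\ell)\in H^\ell$ has at most four cycles on $\Omega$. Then, after relabelling the index set $\{1,\ldots,\ell\}$ if necessary, one of the following holds: (i) $\ell=2$, and $h_1$, $h_2$ each have exactly two cycles on $\Delta$, of lengths $t_1,r-t_1$ and $t_2,r-t_2$ respectively, and each of $t_1,r-t_1$ is relatively prime to each of $t_2,r-t_2$; (ii) $\ell=2$, $h_1$ is a single cycle of length $r$ on $\Delta$, $h_2$ has exactly two cycles on $\Delta$, of lengths $t_2,r-t_2$, and $\gcd(r,t_2)\leq 2$; (iii) $\ell=2$, $h_1$ is a single cycle of length $r$ on $\Delta$, $h_2$ has exactly three cycles on $\Delta$, of lengths $t_2,t_2',r-(t_2+t_2')$, and $\gcd(r,t_2)+\gcd(r,t_2')+\gcd(r,t_2+t_2')\leq 4$; (iv) $\ell=3$, $h_1$ is a single cycle of length $r$ on $\Delta$, $h_2$ has exactly two cycles on $\Delta$, of lengths $t_2,r-t_2$, $h_3$ has exactly two cycles on $\Delta$, of lengths $t_3,r-t_3$, and the integers $r,t_2,r-t_2,t_3,r-t_3$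 are pairwise relatively prime; (v) $\ell=2$, $h_1$ is a single cycle of length $r$ on $\Delta$, $h_2$ has exactly four cycles on $\Delta$, of lengths $t_2,t_2',t_2'',r-(t_2+t_2'+t_2'')$, and $\gcd(r,t_2)=\gcd(r,t_2')=\gcd(r,t_2'')=\gcd(r,t_2+t_2'+t_2'')=1$.
   Context: The number of cycles of a permutation is the number of orbits of the cyclic group it generates, fixed points included. The element $(h_1,\ldots,h_\ell)$ acts on $\Omega=\Delta^\ell$ by $(\delta_1,\ldots,\delta_\ell)\mapsto(\delta_1^{h_1},\ldots,\delta_\ell^{h_\ell})$. *)

From HB Require Import structures.
From mathcomp Require Import all_boot all_order all_algebra all_fingroup.
Set Implicit Arguments. Unset Strict Implicit. Unset Printing Implicit Defensive.
Import GRing.Theory.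

(* The multiset of cycle lengths of s (one entry per cycle, fixed points included). *)
Definition cyc_lens (T : finType) (s : {perm T}) : seq nat :=
  [seq #|pred_of_set C| | C <- enum (porbits s)].

Definition ncycles (T : finType) (s : {perm T}) : nat := #|porbits s|.

(* Coordinatewise action of (h_1,...,h_l) on Omega = Delta^l = {ffun 'I_l -> Delta}. *)
Definition prod_fun (l : nat) (T : finType) (h : 'I_l -> {perm T})
  (f : {ffun 'I_l -> T}) : {ffun 'I_l -> T} := [ffun i => h i (f i)].

Lemma prod_fun_inj (l : nat) (T : finType) (h : 'I_l -> {perm T}) :
  injective (prod_fun h).
Proof.
move=> f g /ffunP E; apply/ffunP => i; have := E i; rewrite !ffunE.
exact: perm_inj.
Qed.

Definition prod_perm (l : nat) (T : finType) (h : 'I_l -> {perm T})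
  : {perm {ffun 'I_l -> T}} := perm (@prod_fun_inj l T h).

Definition prop53_conclusion (T : finType) (l : nat) (h : 'I_l -> {perm T}) : Prop :=
  let r := #|T| in
  (
      (l = 2 /\ exists i j : 'I_l, i != j /\ exists t1 t2 : nat,
        [/\ perm_eq (cyc_lens (h i)) [:: t1; r - t1],
            perm_eq (cyc_lens (h j)) [:: t2; r - t2],
            coprime t1 t2 /\ coprime t1 (r - t2)
          & coprime (r - t1) t2 /\ coprime (r - t1) (r - t2)]) \/
      (l = 2 /\ exists i j : 'I_l, i != j /\ exists t2 : nat,
        [/\ cyc_lens (h i) = [:: r],
            perm_eq (cyc_lens (h j)) [:: t2; r - t2]
          & gcdn r t2 <= 2]) \/
      (l = 2 /\ exists i j : 'I_l, i != j /\ exists t2 t2' : nat,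
        [/\ cyc_lens (h i) = [:: r],
            perm_eq (cyc_lens (h j)) [:: t2; t2'; r - (t2 + t2')]
          & gcdn r t2 + gcdn r t2' + gcdn r (t2 + t2') <= 4]) \/
      (l = 3 /\ exists i j k : 'I_l, [/\ i != j, j != k & i != k] /\ exists t2 t3 : nat,
        [/\ cyc_lens (h i) = [:: r],
            perm_eq (cyc_lens (h j)) [:: t2; r - t2],
            perm_eq (cyc_lens (h k)) [:: t3; r - t3]
          & pairwise coprime [:: r; t2; r - t2; t3; r - t3]]) \/
      (l = 2 /\ exists i j : 'I_l, i != j /\ exists t2 t2' t2'' : nat,
        [/\ cyc_lens (h i) = [:: r],
            perm_eq (cyc_lens (h j)) [:: t2; t2'; t2''; r - (t2 + t2' + t2'')]
          & [/\ gcdn r t2 = 1, gcdn r t2' = 1, gcdn r t2'' = 1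
              & gcdn r (t2 + t2' + t2'') = 1]])).

Definition ksubset (m k : nat) : finType := {A : {set 'I_m} | #|A| == k}.

Definition in_Sym_ksub (m k : nat) (p : {perm ksubset m k}) : Prop :=
  exists s : {perm 'I_m}, forall A : ksubset m k, sval (p A) = s @: sval A.

Definition is_point (F : finFieldType) (d : nat) (S : {set 'rV[F]_d}) : bool :=
  [exists v : 'rV[F]_d, (v != 0%R) && (S == [set a *: v | a : F]%R)].

Definition pg_point (F : finFieldType) (d : nat) : finType :=
  {S : {set 'rV[F]_d} | is_point S}.

(* p is the permutation of points induced by a semilinear bijection
   v |-> v^sigma A, with A invertible and sigma a field automorphism of F
   (every ring endomorphism of a finite field is an automorphism). *)
Definition in_PGammaL (F : finFieldType) (d : nat) (p : {perm pg_point F d}) : Prop :=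
  exists (A : 'M[F]_d) (s : {rmorphism F -> F}),
    A \in unitmx /\
    forall S : pg_point F d, sval (p S) = [set (map_mx s v *m A)%R | v in sval S].

From HB Require Import structures.
From mathcomp Require Import all_boot all_order all_algebra all_fingroup.
From mathcomp Require Import zify.
Set Implicit Arguments. Unset Strict Implicit. Unset Printing Implicit Defensive.
Import GRing.Theory.
Local Open Scope group_scope.
Local Open Scope nat_scope.

(* Choosing one cycle
   C_k of every h_k gives a box C_1 x ... x C_l that is invariant under
   g = (h_1, ..., h_l); these boxes partition Omega, and on a box g has order
   dividing L = lcm(|C_i|, |C_j|) * prod_(k <> i, j) |C_k|, so the box holds at
   least prod_k |C_k| / L = gcd(|C_i|, |C_j|) cycles of g.  Summing, g has at
   least prod_k ncycles(h_k) cycles, and at least sum_(C_j) gcd(r, |C_j|) when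
   h_i is an r-cycle.  With at most four cycles this leaves l <= 3 and the cycle
   types of (i)-(v); in cases (i) and (iv) every box is a single cycle of g,
   whence the coprimality conditions. *)

Lemma gcdn_sum_sym m n : gcdn (m + n) m = gcdn (m + n) n.
Proof. by rewrite gcdnC gcdnDl [RHS]gcdnC gcdnDr gcdnC. Qed.

Lemma leq_n_bin n k : 0 < k < n -> n <= 'C(n, k).
Proof.
elim: n k => [|n IHn] [|k] //= lt_k_n.
have [lt_Sk_n | ge_Sk_n] := ltnP k.+1 n; last first.
  have -> : n = k.+1 by lia.
  by rewrite binSn.
have : 0 < 'C(n, k) by rewrite bin_gt0 ltnW.
by rewrite binS; have := IHn k.+1 lt_Sk_n; lia.
Qed.

Lemma pow2_le_prod l (c : 'I_l -> nat) : (forall k, 0 < c k) ->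
  (forall i j, i != j -> c i = 1 -> c j = 1 -> False) -> 2 ^ l.-1 <= \prod_k c k.
Proof.
case: l c => [|n] c c_gt0 single; first by rewrite big_ord0.
have [k0 c_gt1] : exists k0, forall k, k != k0 -> 1 < c k.
  case: (pickP (fun k => c k == 1)) => [k0 /eqP ck0 | none]; [exists k0 | exists ord0];
    move=> k nk; rewrite ltn_neqAle eq_sym c_gt0 andbT; last by rewrite none.
  by apply/eqP => ck; apply: single nk ck ck0.
rewrite (bigD1 k0) //=; apply: leq_trans (leq_pmull _ (c_gt0 k0)).
apply: leq_trans (leq_prod c_gt1).
by rewrite prod_nat_const cardC1 card_ord.
Qed.

Lemma prod_ord2 (F : 'I_2 -> nat) : \prod_k F k = F ord0 * F ord_max.
Proof. by rewrite big_ord_recr big_ord1; congr (F _ * _); apply: val_inj. Qed.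

Lemma prod_ord3 (F : 'I_3 -> nat) i j k : i != j -> j != k -> i != k ->
  \prod_m F m = F i * F j * F k.
Proof.
move=> nij njk nik; rewrite (bigD1 i) //= (bigD1 j) 1?eq_sym //= (big_pred1 k) ?mulnA //.
move=> m /=; move: i j k m nij njk nik.
by do 4![case=> [[|[|[|?]]] ?] //=].
Qed.

Section PermutationCycles.
Variables (X : finType) (s : {perm X}).

Lemma porbits_porbit C y : C \in porbits s -> y \in C -> C = porbit s y.
Proof. by case/imsetP => z _ -> yz; apply/eqP; rewrite eq_sym eq_porbit_mem. Qed.

Lemma expg_porbit n x : #|porbit s x| %| n -> (s ^+ n) x = x.
Proof. by case/dvdnP=> q ->; rewrite permX iterM iter_fix // iter_porbit. Qed.

Lemma card_porbit_le n x : 0 < n -> (s ^+ n) x = x -> #|porbit s x| <= n.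
Proof.
move=> n_gt0; rewrite permX => sn_x; rewrite -[n in _ <= n]card_ord.
apply: leq_trans (leq_imset_card (fun i : 'I_n => (s ^+ i) x) _).
apply/subset_leq_card/subsetP => _ /porbitP[m ->]; apply/imsetP.
exists (Ordinal (ltn_pmod m n_gt0)) => //=.
by rewrite {1}(divn_eq m n) addnC !permX iterD iterM (iter_fix _ sn_x).
Qed.

Lemma card_le_orbits_mul (A : {set X}) n : 0 < n ->
  {in A, forall x, (s ^+ n) x = x} -> #|A| <= #|[set porbit s x | x in A]| * n.
Proof.
move=> n_gt0 fixA; apply: (@leq_trans #|cover [set porbit s x | x in A]|).
  apply/subset_leq_card/subsetP => x Ax; apply/bigcupP.
  by exists (porbit s x); [apply: imset_f | apply: porbit_id].
apply: leq_trans (leq_card_cover _) _; rewrite -sum_nat_const.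
by apply: leq_sum => _ /imsetP[x Ax ->]; apply: card_porbit_le (fixA x Ax).
Qed.

Lemma cyc_lensP t :
  reflect (exists2 C, C \in porbits s & t = #|C|) (t \in cyc_lens s).
Proof.
apply: (iffP mapP) => [[C] | [C]]; rewrite ?mem_enum => sC ->; exists C => //.
by rewrite mem_enum.
Qed.

Lemma size_cyc_lens : size (cyc_lens s) = ncycles s.
Proof. by rewrite size_map -cardE. Qed.

Lemma big_cyc_lens (f : nat -> nat) :
  \sum_(t <- cyc_lens s) f t = \sum_(C in porbits s) f #|C|.
Proof. by rewrite big_map big_enum. Qed.

Lemma sumn_cyc_lens : sumn (cyc_lens s) = #|X|.
Proof.
rewrite sumnE big_cyc_lens -sum1_card.
rewrite (partition_big (porbit s) (mem (porbits s))) => [|x _]; last exact: imset_f.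
apply: eq_bigr => _ /imsetP[y _ ->]; rewrite -sum1_card.
by apply: eq_bigl => x; rewrite eq_porbit_mem.
Qed.

Lemma ncycles_gt0 : 0 < #|X| -> 0 < ncycles s.
Proof. by rewrite -size_cyc_lens -sumn_cyc_lens; case: (cyc_lens s). Qed.

Lemma cyc_lens_single : ncycles s = 1 -> cyc_lens s = [:: #|X|].
Proof.
rewrite -size_cyc_lens -sumn_cyc_lens.
by case: (cyc_lens s) => [|t []] //= _; rewrite addn0.
Qed.

Lemma cyc_lens_pair : ncycles s = 2 ->
  exists a b, cyc_lens s = [:: a; b] /\ a + b = #|X|.
Proof.
rewrite -size_cyc_lens -sumn_cyc_lens.
by case: (cyc_lens s) => [|a [|b []]] //= _; rewrite addn0; exists a, b.
Qed.

End PermutationCycles.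

Section CycleBoxes.
Variables (T : finType) (l : nat) (h : 'I_l -> {perm T}).
Local Notation g := (prod_perm h).

Lemma prod_permX n x : (g ^+ n) x = [ffun k => (h k ^+ n) (x k)].
Proof.
elim: n x => [|n IHn] x; first by apply/ffunP => k; rewrite !ffunE !perm1.
by apply/ffunP => k; rewrite expgSr permM IHn permE !ffunE expgSr permM.
Qed.

Definition cycle_boxes : {set {ffun 'I_l -> {set T}}} :=
  setXn (fun k => porbits (h k)).

Definition cycle_box_of (x : {ffun 'I_l -> T}) : {ffun 'I_l -> {set T}} :=
  [ffun k => porbit (h k) (x k)].

Definition box_orbits (F : {ffun 'I_l -> {set T}}) : nat :=
  #|[set porbit g x | x in setXn F]|.

Lemma cycle_box_of_in x : cycle_box_of x \in cycle_boxes.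
Proof. by apply/setXnP => k; rewrite ffunE; apply: imset_f. Qed.

Lemma cycle_box_ofE F x : F \in cycle_boxes -> x \in setXn F -> cycle_box_of x = F.
Proof.
move=> /setXnP hF /setXnP xF; apply/ffunP => k; rewrite ffunE.
by rewrite -(porbits_porbit (hF k) (xF k)).
Qed.

Lemma cycle_box_of_porbit x y : y \in porbit g x -> cycle_box_of y = cycle_box_of x.
Proof.
by case/porbitP=> n ->; apply/ffunP => k; rewrite prod_permX !ffunE porbit_perm.
Qed.

Lemma sum_box_orbits_le (S : {set {ffun 'I_l -> {set T}}}) :
  S \subset cycle_boxes -> \sum_(F in S) box_orbits F <= ncycles g.
Proof.
move=> /subsetP sS.
(* the box containing the orbit O (junk when O is empty) *)
pose box (O : {set {ffun 'I_l -> T}}) := oapp cycle_box_of [ffun=> set0] [pick x in O].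
have boxE x : box (porbit g x) = cycle_box_of x.
  rewrite /box; case: pickP => [y /cycle_box_of_porbit //|].
  by move/(_ x); rewrite porbit_id.
apply: (@leq_trans (\sum_(F in S) #|[set O in porbits g | box O == F]|)).
  apply: leq_sum => F SF; apply/subset_leq_card/subsetP => _ /imsetP[x xF ->].
  by rewrite inE imset_f //= boxE (cycle_box_ofE (sS F SF) xF).
rewrite /ncycles -sum1_card.
apply: (@leq_trans (\sum_(O in porbits g | box O \in S) 1)); last first.
  by rewrite [X in _ <= X](bigID (fun O => box O \in S)) leq_addr.
rewrite (partition_big box (mem S)) => [|O /andP[] //].
apply: leq_sum => F SF.
rewrite -sum1_card; apply/eq_leq/eq_bigl => O; rewrite !inE -andbA.
by case: (eqVneq (box O) F) => [->|]; rewrite ?SF ?andbF.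
Qed.

Lemma cycle_boxes_gt0 F k : F \in cycle_boxes -> 0 < #|F k|.
Proof.
by move=> /setXnP/(_ k)/imsetP[x _ ->]; rewrite lt0n card_porbit_neq0.
Qed.

Lemma box_orbits_gt0 F : F \in cycle_boxes -> 0 < box_orbits F.
Proof.
move=> hF; have : 0 < #|setXn F|.
  by rewrite cardsXn prodn_cond_gt0 // => k _; apply: cycle_boxes_gt0 hF.
by rewrite !card_gt0 => /set0Pn[x xF]; apply/set0Pn; exists (porbit g x); apply: imset_f.
Qed.

Lemma gcdn_le_box_orbits F i j :
  F \in cycle_boxes -> i != j -> gcdn #|F i| #|F j| <= box_orbits F.
Proof.
move=> hF nij; have F_gt0 k := cycle_boxes_gt0 k hF.
pose P := \prod_(k | (k != i) && (k != j)) #|F k|.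
pose L := lcmn #|F i| #|F j| * P.
have L_gt0 : 0 < L by rewrite muln_gt0 lcmn_gt0 !F_gt0 prodn_cond_gt0.
have dvdL k : #|F k| %| L.
  have [-> | ki] := eqVneq k i; first exact/dvdn_mulr/dvdn_lcml.
  have [-> | kj] := eqVneq k j; first exact/dvdn_mulr/dvdn_lcmr.
  by apply: dvdn_mull; rewrite /P (bigD1 k) ?ki ?kj //= dvdn_mulr.
have fixF : {in setXn F, forall x, (g ^+ L) x = x}.
  move=> x /setXnP xF; apply/ffunP => k; rewrite prod_permX ffunE expg_porbit //.
  by rewrite -(porbits_porbit (setXnP hF k) (xF k)).
have := card_le_orbits_mul L_gt0 fixF; rewrite cardsXn.
rewrite (bigD1 i) //= (bigD1 j) 1?eq_sym //= mulnA -(muln_lcm_gcd #|F i|) -/P.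
by rewrite mulnAC [X in _ <= X]mulnC leq_pmul2l.
Qed.

Lemma prod_ncycles_le : \prod_k ncycles (h k) <= ncycles g.
Proof.
have -> : \prod_k ncycles (h k) = #|cycle_boxes| by rewrite cardsXn.
rewrite -sum1_card; apply: leq_trans (sum_box_orbits_le (subxx _)).
by apply: leq_sum => F; apply: box_orbits_gt0.
Qed.

Lemma sum_gcdn_cyc_lens_le i j a : i != j -> a \in cyc_lens (h i) ->
  \sum_(t <- cyc_lens (h j)) gcdn a t <= ncycles g.
Proof.
move=> nij /cyc_lensP[_ /imsetP[y _ ->] ->]; rewrite big_cyc_lens.
pose F0 := cycle_box_of [ffun=> y].
pose box B := [ffun k => if k == j then B else F0 k].
have box_in B : B \in porbits (h j) -> box B \in cycle_boxes.
  move=> hB; apply/setXnP => k; rewrite ffunE.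
  by case: eqP => [-> // | _]; apply: setXnP (cycle_box_of_in _) k.
have box_inj : {in porbits (h j) &, injective box}.
  by move=> B B' _ _ /ffunP/(_ j); rewrite !ffunE eqxx.
apply: leq_trans (sum_box_orbits_le (S := box @: porbits (h j)) _); last first.
  by apply/subsetP => _ /imsetP[B hB ->]; apply: box_in.
rewrite [X in _ <= X]big_imset //=; apply: leq_sum => B hB.
by have := gcdn_le_box_orbits (box_in B hB) nij; rewrite !ffunE eqxx (negbTE nij).
Qed.

Lemma card_le_ncycles_of_full_cycles i j : i != j ->
  ncycles (h i) = 1 -> ncycles (h j) = 1 -> #|T| <= ncycles g.
Proof.
move=> nij /cyc_lens_single ci /cyc_lens_single cj.
have := sum_gcdn_cyc_lens_le nij (_ : #|T| \in cyc_lens (h i)).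
by rewrite ci cj mem_seq1 eqxx big_seq1 gcdnn; apply.
Qed.

Lemma box_orbits_tight F : ncycles g <= \prod_k ncycles (h k) ->
  F \in cycle_boxes -> box_orbits F = 1.
Proof.
move=> tight hF; apply/eqP; rewrite eqn_leq box_orbits_gt0 // andbT.
have : \sum_(F' in cycle_boxes) box_orbits F' <= #|cycle_boxes|.
  by apply: leq_trans (sum_box_orbits_le (subxx _)) _; rewrite cardsXn.
rewrite (big_setD1 F hF) (cardsD1 F) hF /=.
have : #|cycle_boxes :\ F| <= \sum_(F' in cycle_boxes :\ F) box_orbits F'.
  by rewrite -sum1_card; apply: leq_sum => F' /setD1P[_ /box_orbits_gt0].
by move=> rest /(leq_trans (leq_add (leqnn _) rest)); rewrite leq_add2r.
Qed.

Lemma coprime_cyc_lens_of_tight i j t u : ncycles g <= \prod_k ncycles (h k) ->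
  i != j -> t \in cyc_lens (h i) -> u \in cyc_lens (h j) -> coprime t u.
Proof.
move=> tight nij /cyc_lensP[_ /imsetP[a _ ->] ->] /cyc_lensP[_ /imsetP[b _ ->] ->].
have := gcdn_le_box_orbits (cycle_box_of_in [ffun k => if k == i then a else b]) nij.
rewrite box_orbits_tight ?cycle_box_of_in // !ffunE eqxx eq_sym (negbTE nij).
by rewrite /coprime eqn_leq => ->; rewrite gcdn_gt0 lt0n card_porbit_neq0.
Qed.

End CycleBoxes.

Lemma conclusion_one_cycle (T : finType) (h : 'I_2 -> {perm T}) i j :
  i != j -> 4 < #|T| -> ncycles (h i) = 1 -> ncycles (prod_perm h) <= 4 ->
  prop53_conclusion h.
Proof.
move=> nij r_gt4 hi1 N4; have hi := cyc_lens_single hi1.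
have g_gt0 t : 0 < gcdn #|T| t by rewrite gcdn_gt0; lia.
have := sum_gcdn_cyc_lens_le nij (_ : #|T| \in cyc_lens (h i)).
rewrite hi mem_seq1 eqxx => /(_ isT)/leq_trans/(_ N4).
have := sumn_cyc_lens (h j); rewrite /prop53_conclusion /=.
case E: (cyc_lens (h j)) => [|a [|b [|c [|d [|e ts]]]]] /=;
  rewrite ?big_cons ?big_nil ?addn0 => Er S4.
- by move: r_gt4; rewrite -Er.
- by move: S4 r_gt4; rewrite -Er gcdnn; lia.
- right; left; split=> //; exists i, j; split=> //; exists a.
  rewrite hi E -Er addKn; split=> //.
  by move: S4; rewrite -Er !gcdn_sum_sym; lia.
- right; right; left; split=> //; exists i, j; split=> //; exists a, b.
  rewrite hi E -Er !addnA addKn; split=> //.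
  by move: S4; rewrite -Er [gcdn _ (a + b)]gcdn_sum_sym !addnA.
- right; right; right; right; split=> //; exists i, j; split=> //; exists a, b, c.
  rewrite hi E -!Er !addnA addKn [gcdn _ (a + b + c)]gcdn_sum_sym; split=> //.
  move: S4 (g_gt0 a) (g_gt0 b) (g_gt0 c) (g_gt0 d); rewrite -Er !addnA => *; split; lia.
- by move: S4 (g_gt0 a) (g_gt0 b) (g_gt0 c) (g_gt0 d) (g_gt0 e); rewrite -Er; lia.
Qed.

Lemma conclusion_two_two (T : finType) (h : 'I_2 -> {perm T}) i j :
  i != j -> ncycles (h i) = 2 -> ncycles (h j) = 2 ->
  ncycles (prod_perm h) <= \prod_k ncycles (h k) -> prop53_conclusion h.
Proof.
move=> nij /cyc_lens_pair[a1 [a2 [Ei Ea]]] /cyc_lens_pair[b1 [b2 [Ej Eb]]] tight.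
have cop t u : t \in [:: a1; a2] -> u \in [:: b1; b2] -> coprime t u.
  by rewrite -Ei -Ej; apply: coprime_cyc_lens_of_tight.
left; split=> //; exists i, j; split=> //; exists a1, b1.
have -> : #|T| - a1 = a2 by rewrite -Ea addKn.
have -> : #|T| - b1 = b2 by rewrite -Eb addKn.
by rewrite Ei Ej !cop ?inE ?eqxx ?orbT.
Qed.

Lemma conclusion_one_two_two (T : finType) (h : 'I_3 -> {perm T}) i j k :
  i != j -> j != k -> i != k ->
  ncycles (h i) = 1 -> ncycles (h j) = 2 -> ncycles (h k) = 2 ->
  ncycles (prod_perm h) <= \prod_m ncycles (h m) -> prop53_conclusion h.
Proof.
move=> nij njk nik /cyc_lens_single Ei /cyc_lens_pair[b1 [b2 [Ej Eb]]].
move=> /cyc_lens_pair[c1 [c2 [Ek Ec]]] tight.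
have cop := coprime_cyc_lens_of_tight tight.
have [rb1 rb2] : coprime #|T| b1 /\ coprime #|T| b2.
  by split; apply: (cop i j); rewrite ?Ei ?Ej ?inE ?eqxx ?orbT.
have [rc1 rc2] : coprime #|T| c1 /\ coprime #|T| c2.
  by split; apply: (cop i k); rewrite ?Ei ?Ek ?inE ?eqxx ?orbT.
have [bc11 bc12 bc21 bc22] : [/\ coprime b1 c1, coprime b1 c2, coprime b2 c1
                                & coprime b2 c2].
  by split; apply: (cop j k); rewrite ?Ej ?Ek ?inE ?eqxx ?orbT.
have b12 : coprime b1 b2 by rewrite /coprime -gcdnDl Eb gcdnC.
have c12 : coprime c1 c2 by rewrite /coprime -gcdnDl Ec gcdnC.
right; right; right; left; split=> //; exists i, j, k; split=> //; exists b1, c1.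
have -> : #|T| - b1 = b2 by rewrite -Eb addKn.
have -> : #|T| - c1 = c2 by rewrite -Ec addKn.
by rewrite Ei Ej Ek /= rb1 rb2 rc1 rc2 bc11 bc12 bc21 bc22 b12 c12; split.
Qed.

Lemma prop53_conclusion_l2 (T : finType) (h : 'I_2 -> {perm T}) :
  4 < #|T| -> ncycles (prod_perm h) <= 4 -> prop53_conclusion h.
Proof.
move=> r_gt4 N4; have n01 : (ord0 : 'I_2) != ord_max by [].
have [c0 | c0] := eqVneq (ncycles (h ord0)) 1.
  exact: conclusion_one_cycle n01 r_gt4 c0 N4.
have [c1 | c1] := eqVneq (ncycles (h ord_max)) 1.
  exact: (conclusion_one_cycle (j := ord0) _ r_gt4 c1 N4).
have r_gt0 : 0 < #|T| by lia.
have [e0 e1] : ncycles (h ord0) = 2 /\ ncycles (h ord_max) = 2.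
  move: (leq_trans (prod_ncycles_le h) N4) c0 c1; rewrite prod_ord2.
  by move: (ncycles_gt0 (h ord0) r_gt0) (ncycles_gt0 (h ord_max) r_gt0); split; nia.
by apply: (conclusion_two_two n01 e0 e1); rewrite prod_ord2 e0 e1.
Qed.

Lemma prop53_conclusion_l3 (T : finType) (h : 'I_3 -> {perm T}) :
  4 < #|T| -> ncycles (prod_perm h) <= 4 -> prop53_conclusion h.
Proof.
move=> r_gt4 N4; have r_gt0 : 0 < #|T| by lia.
have c_gt0 k := ncycles_gt0 (h k) r_gt0.
have prod_le4 := leq_trans (prod_ncycles_le h) N4.
have not_single i j : i != j -> ncycles (h i) = 1 -> ncycles (h j) != 1.
  by move=> nij ci; apply/eqP => cj; have := card_le_ncycles_of_full_cycles nij ci cj; lia.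
have one_two_two i j k : i != j -> j != k -> i != k -> ncycles (h i) = 1 ->
    prop53_conclusion h.
  move=> nij njk nik ci; move: prod_le4; rewrite (prod_ord3 _ nij njk nik) ci => prod_le4.
  have [cj ck] : ncycles (h j) = 2 /\ ncycles (h k) = 2.
    move: (not_single _ _ nij ci) (not_single _ _ nik ci) (c_gt0 j) (c_gt0 k).
    by split; nia.
  apply: (conclusion_one_two_two nij njk nik ci cj ck).
  by rewrite (prod_ord3 _ nij njk nik) ci cj ck.
have n01 : (ord0 : 'I_3) != inord 1 by rewrite -val_eqE /= inordK.
have n12 : (inord 1 : 'I_3) != ord_max by rewrite -val_eqE /= inordK.
have n02 : (ord0 : 'I_3) != ord_max by [].
have [c0 | c0] := eqVneq (ncycles (h ord0)) 1; first exact: one_two_two n01 n12 n02 c0.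
have [c1 | c1] := eqVneq (ncycles (h (inord 1))) 1.
  by apply: (one_two_two _ _ _ _ n02 n12 c1); rewrite eq_sym.
have [c2 | c2] := eqVneq (ncycles (h ord_max)) 1.
  by apply: (one_two_two _ _ _ _ n01 _ c2); rewrite eq_sym.
move: prod_le4 (c_gt0 ord0) (c_gt0 (inord 1)) (c_gt0 ord_max) c0 c1 c2.
by rewrite (prod_ord3 _ n01 n12 n02); nia.
Qed.

Lemma prop53_conclusion_of_ncycles_le4 (T : finType) l (h : 'I_l -> {perm T}) :
  4 < #|T| -> 1 < l -> ncycles (prod_perm h) <= 4 -> prop53_conclusion h.
Proof.
move=> r_gt4 l_gt1 N4; have r_gt0 : 0 < #|T| by lia.
have l_le3 : l <= 3.
  have single i j : i != j -> ncycles (h i) = 1 -> ncycles (h j) = 1 -> False.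
    by move=> nij ci cj; have := card_le_ncycles_of_full_cycles nij ci cj; lia.
  have := pow2_le_prod (fun k => ncycles_gt0 (h k) r_gt0) single.
  move/leq_trans/(_ (leq_trans (prod_ncycles_le h) N4)).
  apply: contraTT; rewrite -!ltnNge => l_gt3.
  by apply: (@leq_trans (2 ^ 3)); rewrite // leq_exp2l //; lia.
case: l h l_gt1 l_le3 N4 => [|[|[|[|l]]]] // h _ _ N4.
- exact: prop53_conclusion_l2.
- exact: prop53_conclusion_l3.
Qed.

Lemma card_ksubset m k : 0 < k < m -> m <= #|ksubset m k|.
Proof.
move=> k_lt; rewrite card_sig -[m in m <= _]card_ord.
have -> : #|[pred A : {set 'I_m} | #|A| == k]| = 'C(#|'I_m|, k).
  by rewrite -card_draws cardsE.
by apply: leq_n_bin; rewrite card_ord.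
Qed.

Section ProjectiveLine.
Local Open Scope ring_scope.
Variables (F : finFieldType) (d : nat) (i0 i1 : 'I_d).
Hypothesis ni01 : i0 != i1.

(* Homogeneous coordinates (1 : a) for [Some a] and (0 : 1) for [None] in the
   coordinates i0, i1: the |F| + 1 points of a projective line. *)
Definition affine_vec (o : option F) : 'rV[F]_d :=
  \row_t (if t == i0 then (o != None)%:R else if t == i1 then odflt 1 o else 0).

Lemma affine_vec_neq0 o : affine_vec o != 0.
Proof.
apply/eqP => /rowP v0; move: (v0 i0) (v0 i1).
rewrite !mxE eqxx (eq_sym i1) (negbTE ni01) eqxx.
by case: o {v0} => [a|] /= => [|_] /eqP; rewrite oner_eq0.
Qed.

Lemma is_point_affine_vec o : is_point [set a *: affine_vec o | a : F].
Proof. by apply/existsP; exists (affine_vec o); rewrite affine_vec_neq0 eqxx. Qed.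

Definition affine_point (o : option F) : pg_point F d :=
  exist (fun S => is_point S) _ (is_point_affine_vec o).

Lemma affine_point_inj : injective affine_point.
Proof.
move=> o o' /(congr1 sval) /= eq_span.
have : affine_vec o' \in [set a *: affine_vec o | a : F].
  by rewrite eq_span; apply/imsetP; exists 1; rewrite ?scale1r.
case/imsetP => c _ /rowP v_eq; move: (v_eq i0) (v_eq i1).
rewrite !mxE eqxx (eq_sym i1) (negbTE ni01) eqxx.
case: o o' {v_eq eq_span} => [a|] [b|] //=.
- by rewrite mulr1 => <-; rewrite mul1r => ->.
- by rewrite mulr1 => <-; rewrite mul0r => /eqP; rewrite oner_eq0.
- by rewrite mulr0 => /eqP; rewrite oner_eq0.
Qed.
End ProjectiveLine.

Lemma card_pg_point (F : finFieldType) d : 1 < d -> #|F| < #|pg_point F d|.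
Proof.
move=> d_gt1; have ni01 : Ordinal (ltnW d_gt1) != Ordinal d_gt1 by [].
by rewrite -card_option; apply: leq_card (affine_point_inj (ni01 := ni01)).
Qed.

Theorem proposition5p3 :
  (forall (m k l : nat) (h : 'I_l -> {perm ksubset m k}),
     5 <= m -> 1 <= k -> k.*2 < m -> 2 <= l ->
     (forall i, in_Sym_ksub (h i)) ->
     ncycles (prod_perm h) <= 4 ->
     prop53_conclusion h)
  /\
  (forall (q d l : nat) (F : finFieldType) (h : 'I_l -> {perm pg_point F d}),
     #|F| = q -> 4 <= q -> 2 <= d -> 2 <= l ->
     (forall i, in_PGammaL (h i)) ->
     ncycles (prod_perm h) <= 4 ->
     prop53_conclusion h).
Proof.
split.
- move=> m k l h m_ge5 k_ge1 k2_lt_m l_ge2 _; apply: prop53_conclusion_of_ncycles_le4 => //.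
  by apply: leq_trans m_ge5 (card_ksubset _); lia.
- move=> q d l F h <- q_ge4 d_ge2 l_ge2 _; apply: prop53_conclusion_of_ncycles_le4 => //.
  exact: leq_ltn_trans q_ge4 (card_pg_point F d_ge2).
Qed.
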